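(* Let $m\ge0$ be an integer and assume (A1) and (A2) from the context. Consider the system of equations in the unknowns $\{A(j),k_i(j)\}_{N_0\le j\le N_0+m,\,1\le i\le j}$ consisting of the terminal conditions $$A(N_0+m)=\frac{1}{\beta_\Sigma(N_0+m)},\qquad k_i(N_0+m)=\frac{\beta_i(N_0+m)A(N_0+m)-1}{\alpha_i}\quad(1\le i\le N_0+m),$$ and, for $N_0\le j<N_0+m$ and $1\le i\le j$, $$\frac{1}{A(j)}=\beta_\Sigma(j)+\lambda-\Big(\alpha_\Sigma(j)\sum_{i=1}^j\frac{\lambda A(j+1)e^{-\alpha_i(k_i(j+1)-k_i(j))}}{\alpha_i}\Big)\frac{1}{A(j)},\qquad k_i(j)=\frac{(\beta_i(j)+\lambda)A(j)-1}{\alpha_i}-\frac{\lambda A(j+1)e^{-\alpha_i(k_i(j+1)-k_i(j))}}{\alpha_i}.$$ Then this system has a unique solution with $A(j)>0$ for all $N_0\le j\le N_0+m$, and this solution satisfies, for $N_0\le j\le N_0+m$ and $1\le i\le j$, $$\frac{1}{\overline{\beta}+\lambda}<A(j)\le\frac{1}{\underline{\beta}},\qquad A(j)e^{-\alpha_ik_i(j)}\le\frac{1}{\underline{\beta}},\qquad -\ln\Big(\frac{\overline{\beta}+\lambda}{\underline{\beta}}\Big)\le\alpha_ik_i(j)\le\frac{\overline{\beta}+\lambda}{\underline{\beta}}-1.$$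
   Context: $N_0\ge1$ is an integer, $\lambda>0$, and for each $i\in\mathbb{N}$, $\alpha_i>0$, $\rho_i>0$, and $\mu_i(j),\sigma_i(j)\in\mathbb{R}$ for $j\ge N_0\vee i$. Define $\alpha_\Sigma(j):=(\sum_{i=1}^j1/\alpha_i)^{-1}$, $\beta_i(j):=\rho_i+\alpha_i\mu_i(j)-\frac12\alpha_i^2\sigma_i^2(j)$, $\beta_\Sigma(j):=\alpha_\Sigma(j)\sum_{i=1}^j\beta_i(j)/\alpha_i$. Assumptions: (A1) for each $i$, $\{\mu_i(j)\}_{j\ge N_0\vee i}$ and $\{\sigma_i(j)\}_{j\ge N_0\vee i}$ are bounded; (A2) there are constants $0<\underline{\beta}\le\overline{\beta}$ with $\underline{\beta}\le\beta_i(j)\le\overline{\beta}$ for all $j\ge N_0$, $1\le i\le j$. *)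

From Stdlib Require Import Reals Lra Lia.
Open Scope R_scope.

Fixpoint sumR (f : nat -> R) (j : nat) : R :=
  match j with
  | O => 0
  | S j' => sumR f j' + f j
  end.

Definition alphaSigma (alpha : nat -> R) (j : nat) : R :=
  / sumR (fun i => / alpha i) j.

Definition beta (alpha rho : nat -> R) (mu sigma : nat -> nat -> R)
  (i j : nat) : R :=
  rho i + alpha i * mu i j - / 2 * alpha i ^ 2 * (sigma i j) ^ 2.

Definition betaSigma (alpha rho : nat -> R) (mu sigma : nat -> nat -> R)
  (j : nat) : R :=
  alphaSigma alpha j * sumR (fun i => beta alpha rho mu sigma i j / alpha i) j.

Definition IsSolution (N0 m : nat) (lambda : R) (alpha rho : nat -> R)
  (mu sigma : nat -> nat -> R) (A : nat -> R) (k : nat -> nat -> R) : Prop :=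
  let bS := betaSigma alpha rho mu sigma in
  let b := beta alpha rho mu sigma in
  A (N0 + m)%nat = / bS (N0 + m)%nat /\
  (forall i : nat, (1 <= i <= N0 + m)%nat ->
     k i (N0 + m)%nat = (b i (N0 + m)%nat * A (N0 + m)%nat - 1) / alpha i) /\
  (forall j : nat, (N0 <= j < N0 + m)%nat ->
     / A j = bS j + lambda
             - (alphaSigma alpha j *
                sumR (fun i => lambda * A (S j)
                                 * exp (- (alpha i * (k i (S j) - k i j)))
                                 / alpha i) j) * / A j) /\
  (forall j i : nat, (N0 <= j < N0 + m)%nat -> (1 <= i <= j)%nat ->
     k i j = ((b i j + lambda) * A j - 1) / alpha i
             - lambda * A (S j) * exp (- (alpha i * (k i (S j) - k i j)))
               / alpha i).

From Stdlib Require Import Reals Lra Lia ClassicalEpsilon.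
Open Scope R_scope.

(* With d_i = lambda A(j+1) exp(-alpha_i k_i(j+1)), the equations
   at time j < N0+m say that y_i = alpha_i k_i(j) solves y_i + d_i e^(y_i) = (beta_i(j)+lambda) A(j) - 1
   and, once these hold, the equation for A(j) is equivalent to sum_i k_i(j) = 0.  As y |-> y + d e^y
   is an increasing bijection with 1-Lipschitz inverse, each k_i(j) is a continuous increasing
   function of A(j), so A(j) is the unique zero of their sum; the intermediate value theorem locates
   it between 1/(beta_hi+lambda) and 2/beta_lo provided d_i beta_lo <= lambda.  That proviso is the
   bound A(j+1) exp(-alpha_i k_i(j+1)) <= 1/beta_lo, which holds at the terminal time because
   e^y >= 1 + y, and which each step reproduces together with the other bounds. *)

Lemma sumR_ext (f g : nat -> R) (j : nat) :
  (forall i, (1 <= i <= j)%nat -> f i = g i) -> sumR f j = sumR g j.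
Proof.
  induction j as [|j IH]; intros Hfg; simpl; [reflexivity|].
  rewrite IH by (intros; apply Hfg; lia). rewrite Hfg by lia. reflexivity.
Qed.

Lemma sumR_le (f g : nat -> R) (j : nat) :
  (forall i, (1 <= i <= j)%nat -> f i <= g i) -> sumR f j <= sumR g j.
Proof.
  induction j as [|j IH]; intros Hfg; simpl; [lra|].
  assert (sumR f j <= sumR g j) by (apply IH; intros; apply Hfg; lia).
  specialize (Hfg (S j) ltac:(lia)). lra.
Qed.

Lemma sumR_lt (f g : nat -> R) (j : nat) : (1 <= j)%nat ->
  (forall i, (1 <= i <= j)%nat -> f i < g i) -> sumR f j < sumR g j.
Proof.
  induction j as [|j IH]; intros Hj Hfg; [lia|]. simpl.
  specialize (Hfg (S j) ltac:(lia)) as Hlast.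
  destruct j as [|j]; simpl; [lra|].
  assert (sumR f (S j) < sumR g (S j)) by (apply IH; [lia|intros; apply Hfg; lia]).
  simpl in *. lra.
Qed.

Lemma sumR_0 (j : nat) : sumR (fun _ => 0) j = 0.
Proof. induction j as [|j IH]; simpl; [|rewrite IH]; ring. Qed.

Lemma sumR_lt0 (f : nat -> R) (j : nat) : (1 <= j)%nat ->
  (forall i, (1 <= i <= j)%nat -> f i < 0) -> sumR f j < 0.
Proof. intros Hj Hf. rewrite <- (sumR_0 j). exact (sumR_lt _ _ _ Hj Hf). Qed.

Lemma sumR_gt0 (f : nat -> R) (j : nat) : (1 <= j)%nat ->
  (forall i, (1 <= i <= j)%nat -> 0 < f i) -> 0 < sumR f j.
Proof. intros Hj Hf. rewrite <- (sumR_0 j). exact (sumR_lt _ _ _ Hj Hf). Qed.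

Lemma sumR_scal (c : R) (f : nat -> R) (j : nat) :
  sumR (fun i => c * f i) j = c * sumR f j.
Proof. induction j as [|j IH]; simpl; [|rewrite IH]; ring. Qed.

Lemma sumR_lincomb (u v : R) (f g h : nat -> R) (j : nat) :
  sumR (fun i => u * f i + v * g i - h i) j = u * sumR f j + v * sumR g j - sumR h j.
Proof. induction j as [|j IH]; simpl; [|rewrite IH]; ring. Qed.

Lemma lipschitz_continuity (f : R -> R) (L : R) :
  (forall x y, Rabs (f x - f y) <= L * Rabs (x - y)) -> continuity f.
Proof.
  intros Hf x eps Heps.
  pose proof (Rabs_pos L) as HL.
  exists (eps / (Rabs L + 1)). split; [apply Rdiv_lt_0_compat; lra|].
  intros y [_ Hy]. simpl in *. unfold Rdist in *.
  apply Rle_lt_trans with (Rabs L * Rabs (y - x)).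
  - eapply Rle_trans; [apply Hf|]. apply Rmult_le_compat_r; [apply Rabs_pos|apply Rle_abs].
  - apply Rle_lt_trans with ((Rabs L + 1) * Rabs (y - x)); [pose proof (Rabs_pos (y - x)); nra|].
    apply Rmult_lt_compat_l with (r := Rabs L + 1) in Hy; [|lra].
    replace ((Rabs L + 1) * (eps / (Rabs L + 1))) with eps in Hy by (field; lra). exact Hy.
Qed.

Lemma sumR_continuity (h : nat -> R -> R) (j : nat) :
  (forall i, (1 <= i <= j)%nat -> continuity (h i)) ->
  continuity (fun a => sumR (fun i => h i a) j).
Proof.
  induction j as [|j IH]; intros Hh; simpl.
  - apply continuity_const. intros x y. reflexivity.
  - apply (continuity_plus (fun a => sumR (fun i => h i a) j) (h (S j))).
    + apply IH. intros; apply Hh; lia.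
    + apply Hh; lia.
Qed.

Lemma backward_recursion {X : Type} (N0 T : nat) (Term : X -> Prop)
  (Step : nat -> X -> X -> Prop) (Inv : nat -> X -> Prop) :
  (N0 <= T)%nat -> (exists x, Term x /\ Inv T x) ->
  (forall j x', (N0 <= j < T)%nat -> Inv (S j) x' -> exists x, Step j x x' /\ Inv j x) ->
  exists f : nat -> X, Term (f T) /\ (forall j, (N0 <= j <= T)%nat -> Inv j (f j)) /\
    (forall j, (N0 <= j < T)%nat -> Step j (f j) (f (S j))).
Proof.
  intros HT [xT [HxT HinvT]] Hstep.
  assert (Hn : forall n, (n <= T - N0)%nat -> exists f : nat -> X, Term (f T) /\
            (forall j, (T - n <= j <= T)%nat -> Inv j (f j)) /\
            (forall j, (T - n <= j < T)%nat -> Step j (f j) (f (S j)))).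
  { induction n as [|n IH]; intros Hn.
    - exists (fun _ => xT). split; [exact HxT|].
      split; intros j Hj; [replace j with T by lia; exact HinvT | lia].
    - destruct (IH ltac:(lia)) as [f [HfT [Hfi Hfs]]].
      destruct (Hstep (T - S n)%nat (f (T - n)%nat) ltac:(lia))
        as [x [Hx Hxi]]; [replace (T - n)%nat with (S (T - S n)) by lia; apply Hfi; lia|].
      exists (fun j => if Nat.eqb j (T - S n) then x else f j).
      split; [|split].
      + destruct (Nat.eqb_spec T (T - S n)); [lia|exact HfT].
      + intros j Hj. destruct (Nat.eqb_spec j (T - S n)) as [->|Hne]; [exact Hxi|].
        apply Hfi; lia.
      + intros j Hj. destruct (Nat.eqb_spec (S j) (T - S n)); [lia|].
        destruct (Nat.eqb_spec j (T - S n)) as [->|Hne].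
        * replace (S (T - S n)) with (T - n)%nat by lia. exact Hx.
        * apply Hfs; lia. }
  destruct (Hn (T - N0)%nat (le_n _)) as [f Hf].
  exists f. replace (T - (T - N0))%nat with N0 in Hf by lia. exact Hf.
Qed.

Lemma backward_uniqueness {X : Type} (N0 T : nat) (E : nat -> X -> X -> Prop)
  (Term : X -> Prop) (Step : nat -> X -> X -> Prop) (Inv : nat -> X -> Prop) (f g : nat -> X) :
  (forall x y, Term x -> Term y -> E T x y) ->
  (forall j x y x' y', (N0 <= j < T)%nat -> Inv j x -> Inv j y -> Inv (S j) x' ->
     Step j x x' -> Step j y y' -> E (S j) x' y' -> E j x y) ->
  Term (f T) -> Term (g T) ->
  (forall j, (N0 <= j <= T)%nat -> Inv j (f j) /\ Inv j (g j)) ->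
  (forall j, (N0 <= j < T)%nat -> Step j (f j) (f (S j)) /\ Step j (g j) (g (S j))) ->
  forall j, (N0 <= j <= T)%nat -> E j (f j) (g j).
Proof.
  intros HTerm Hstep HfT HgT Hinv Hsteps j Hj.
  remember (T - j)%nat as n eqn:Hn. revert j Hj Hn.
  induction n as [|n IH]; intros j Hj Hn.
  - replace j with T by lia. apply HTerm; assumption.
  - apply (Hstep j _ _ (f (S j)) (g (S j))); [lia | apply Hinv; lia | apply Hinv; lia
      | apply Hinv; lia | apply Hsteps; lia | apply Hsteps; lia | apply IH; lia].
Qed.

Definition lin_exp (d x : R) : R := x + d * exp x.

Section LinExp.
Variable d : R.
Hypothesis Hd : 0 <= d.

Lemma lin_exp_lt x y : x < y -> lin_exp d x < lin_exp d y.
Proof. intros Hxy. unfold lin_exp. pose proof (exp_increasing x y Hxy). nra. Qed.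

Lemma lin_exp_le x y : x <= y -> lin_exp d x <= lin_exp d y.
Proof. intros [Hxy|<-]; [left; apply lin_exp_lt|]; lra. Qed.

Lemma lin_exp_lt_reg x y : lin_exp d x < lin_exp d y -> x < y.
Proof. intros H. destruct (Rlt_or_le x y) as [|Hyx]; [assumption|]. apply lin_exp_le in Hyx. lra. Qed.

Lemma lin_exp_inj x y : lin_exp d x = lin_exp d y -> x = y.
Proof.
  intros H. destruct (Rtotal_order x y) as [Hxy|[Hxy|Hxy]]; [|assumption|];
    apply lin_exp_lt in Hxy; lra.
Qed.

Lemma lin_exp_pos y : d < lin_exp d y -> 0 < y.
Proof.
  intros H. apply lin_exp_lt_reg. unfold lin_exp at 1. rewrite exp_0. lra.
Qed.

Lemma exp_ge_of_lin_exp c y : 0 < c -> c - 1 + d * c <= lin_exp d y -> c <= exp y.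
Proof.
  unfold lin_exp. intros Hc H.
  destruct (Rle_or_lt c (exp y)) as [|Hlt]; [assumption|].
  pose proof (exp_ineq1_le y). nra.
Qed.

Lemma lin_exp_sub_ge x y : x <= y -> y - x <= lin_exp d y - lin_exp d x.
Proof.
  intros [Hxy|<-]; [|lra]. unfold lin_exp.
  pose proof (exp_increasing x y Hxy). nra.
Qed.

Lemma lin_exp_surj r : exists x, lin_exp d x = r.
Proof.
  set (f := fun x => lin_exp d x - r).
  assert (Hf : continuity f) by (apply derivable_continuous; unfold f, lin_exp; reg).
  set (x0 := - Rabs r - d - 1). set (x1 := Rabs r + 1).
  pose proof (Rle_abs r). pose proof (Rle_abs (- r)) as Hr. rewrite Rabs_Ropp in Hr.
  assert (Hx0 : f x0 < 0).
  { assert (exp x0 < 1) by (rewrite <- exp_0; apply exp_increasing; unfold x0; lra).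
    unfold f, lin_exp, x0 in *. nra. }
  assert (Hx1 : 0 < f x1).
  { pose proof (exp_pos x1). unfold f, lin_exp, x1 in *. nra. }
  destruct (IVT f x0 x1 Hf ltac:(unfold x0, x1; lra) Hx0 Hx1) as [x [_ Hx]].
  exists x. unfold f in Hx. lra.
Qed.

Definition lin_exp_inv (r : R) : R := epsilon (inhabits 0) (fun x => lin_exp d x = r).

Lemma lin_exp_invK r : lin_exp d (lin_exp_inv r) = r.
Proof. exact (epsilon_spec (inhabits 0) (fun x => lin_exp d x = r) (lin_exp_surj r)). Qed.

Lemma lin_exp_inv_lipschitz r s : Rabs (lin_exp_inv r - lin_exp_inv s) <= Rabs (r - s).
Proof.
  rewrite <- (lin_exp_invK r) at 2. rewrite <- (lin_exp_invK s) at 2.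
  set (x := lin_exp_inv r). set (y := lin_exp_inv s).
  destruct (Rle_or_lt x y) as [Hxy|Hxy].
  - pose proof (lin_exp_sub_ge x y Hxy).
    rewrite !Rabs_left1; lra.
  - pose proof (lin_exp_sub_ge y x ltac:(lra)).
    rewrite !Rabs_right; lra.
Qed.

Lemma lin_exp_inv_affine_continuity (c alpha : R) : 0 < alpha ->
  continuity (fun a => lin_exp_inv (c * a - 1) / alpha).
Proof.
  intros Halpha. apply (lipschitz_continuity _ (Rabs c / alpha)). intros x y.
  replace (lin_exp_inv (c * x - 1) / alpha - lin_exp_inv (c * y - 1) / alpha)
    with ((lin_exp_inv (c * x - 1) - lin_exp_inv (c * y - 1)) / alpha) by (field; lra).
  pose proof (lin_exp_inv_lipschitz (c * x - 1) (c * y - 1)) as H.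
  replace (c * x - 1 - (c * y - 1)) with (c * (x - y)) in H by ring.
  rewrite Rabs_mult in H. unfold Rdiv.
  rewrite Rabs_mult, Rabs_inv, (Rabs_pos_eq alpha) by lra.
  pose proof (Rinv_0_lt_compat _ Halpha). nra.
Qed.

End LinExp.

Lemma lin_exp_neg d y : 0 < d -> lin_exp d y <= 0 -> y < 0.
Proof. unfold lin_exp. intros Hd H. pose proof (exp_pos y). nra. Qed.

Lemma exp_bound_of_le (blo a y : R) : 0 < blo -> blo * a <= exp y -> a * exp (- y) <= / blo.
Proof.
  intros Hlo Hle. rewrite exp_Ropp. pose proof (exp_pos y).
  apply (Rmult_le_reg_l (blo * exp y)); [nra|].
  replace (blo * exp y * (a * / exp y)) with (blo * a) by (field; lra).
  replace (blo * exp y * / blo) with (exp y) by (field; lra). exact Hle.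
Qed.

Section Step.
Variables (alpha b d : nat -> R) (lam blo bhi : R) (j : nat).
Hypotheses (Hj : (1 <= j)%nat) (Halpha : forall i, (1 <= i <= j)%nat -> 0 < alpha i)
  (Hlam : 0 < lam) (Hlo : 0 < blo) (Hb : forall i, (1 <= i <= j)%nat -> blo <= b i <= bhi)
  (Hd : forall i, (1 <= i <= j)%nat -> 0 < d i)
  (Hdlam : forall i, (1 <= i <= j)%nat -> d i * blo <= lam).

Definition k_equations (a : R) (k : nat -> R) : Prop :=
  forall i, (1 <= i <= j)%nat -> lin_exp (d i) (alpha i * k i) = (b i + lam) * a - 1.

Definition step_system (a : R) (k : nat -> R) : Prop := k_equations a k /\ sumR k j = 0.

Lemma k_equations_sum_neg a k : k_equations a k -> (bhi + lam) * a <= 1 -> sumR k j < 0.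
Proof.
  intros Hk Ha. apply sumR_lt0; [exact Hj|]. intros i Hi.
  specialize (Halpha i Hi). specialize (Hb i Hi).
  assert (alpha i * k i < 0).
  { apply (lin_exp_neg (d i)); [exact (Hd i Hi)|]. rewrite Hk by exact Hi.
    destruct (Rle_or_lt a 0); nra. }
  nra.
Qed.

Lemma k_equations_sum_pos a k : k_equations a k -> 1 < blo * a -> 0 < sumR k j.
Proof.
  intros Hk Ha. apply sumR_gt0; [exact Hj|]. intros i Hi.
  specialize (Halpha i Hi). specialize (Hb i Hi). specialize (Hdlam i Hi). specialize (Hd i Hi).
  assert (0 < alpha i * k i).
  { apply (lin_exp_pos (d i)); [lra|]. rewrite Hk by exact Hi. nra. }
  nra.
Qed.

Lemma step_system_unique a k a' k' : step_system a k -> step_system a' k' ->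
  a = a' /\ forall i, (1 <= i <= j)%nat -> k i = k' i.
Proof.
  assert (Hmono : forall a1 k1 a2 k2, k_equations a1 k1 -> k_equations a2 k2 -> a1 < a2 ->
            sumR k1 j < sumR k2 j).
  { intros a1 k1 a2 k2 H1 H2 Ha. apply sumR_lt; [exact Hj|]. intros i Hi.
    specialize (Halpha i Hi). specialize (Hb i Hi). specialize (Hd i Hi).
    apply (Rmult_lt_reg_l (alpha i)); [assumption|].
    apply (lin_exp_lt_reg (d i)); [lra|]. rewrite H1, H2 by exact Hi. nra. }
  intros [Hk Hsum] [Hk' Hsum'].
  assert (Ha : a = a').
  { destruct (Rtotal_order a a') as [Hlt|[Heq|Hlt]]; [| exact Heq |].
    - pose proof (Hmono _ _ _ _ Hk Hk' Hlt). lra.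
    - pose proof (Hmono _ _ _ _ Hk' Hk Hlt). lra. }
  subst a'. split; [reflexivity|]. intros i Hi.
  apply (Rmult_eq_reg_l (alpha i)); [|specialize (Halpha i Hi); lra].
  apply (lin_exp_inj (d i)); [left; exact (Hd i Hi)|]. rewrite Hk, Hk' by exact Hi. reflexivity.
Qed.

Lemma step_system_exists : exists a k, step_system a k.
Proof.
  set (k := fun a i => lin_exp_inv (d i) ((b i + lam) * a - 1) / alpha i).
  assert (Hk : forall a, k_equations a (k a)).
  { intros a i Hi. unfold k. specialize (Halpha i Hi).
    replace (alpha i * _) with (lin_exp_inv (d i) ((b i + lam) * a - 1)) by (field; lra).
    apply lin_exp_invK. left; exact (Hd i Hi). }
  set (F := fun a => sumR (k a) j).
  assert (HF : continuity F).
  { apply sumR_continuity. intros i Hi.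
    apply lin_exp_inv_affine_continuity; [left; exact (Hd i Hi)|exact (Halpha i Hi)]. }
  assert (Hb1 := Hb 1%nat ltac:(lia)).
  set (a0 := / (bhi + lam)). set (a1 := 2 / blo).
  assert (Ha01 : a0 < a1).
  { apply Rlt_trans with (/ blo); unfold a0, a1, Rdiv.
    - apply Rinv_lt_contravar; nra.
    - pose proof (Rinv_0_lt_compat blo Hlo). lra. }
  assert (HF0 : F a0 < 0).
  { apply (k_equations_sum_neg _ _ (Hk a0)). unfold a0. rewrite Rinv_r; lra. }
  assert (HF1 : 0 < F a1).
  { apply (k_equations_sum_pos _ _ (Hk a1)). unfold a1. field_simplify; lra. }
  destruct (IVT F a0 a1 HF Ha01 HF0 HF1) as [a [_ HFa]].
  exists a, (k a). split; [exact (Hk a)|exact HFa].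
Qed.

Definition in_bounds (a : R) (k : nat -> R) : Prop :=
  / (bhi + lam) < a <= / blo /\
  forall i, (1 <= i <= j)%nat ->
    a * exp (- (alpha i * k i)) <= / blo /\ alpha i * k i <= (bhi + lam) * a - 1.

Lemma step_system_in_bounds a k : step_system a k -> in_bounds a k.
Proof.
  intros [Hk Hsum]. assert (Hb1 := Hb 1%nat ltac:(lia)).
  assert (Hlow : / (bhi + lam) < a).
  { apply Rnot_le_lt. intros Hle.
    apply (Rmult_le_compat_l (bhi + lam)) in Hle; [|lra]. rewrite Rinv_r in Hle by lra.
    pose proof (k_equations_sum_neg a k Hk Hle). lra. }
  assert (Hup : a <= / blo).
  { apply Rnot_lt_le. intros Hlt.
    apply (Rmult_lt_compat_l blo) in Hlt; [|lra]. rewrite Rinv_r in Hlt by lra.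
    pose proof (k_equations_sum_pos a k Hk Hlt). lra. }
  assert (Hpos : 0 < a) by (pose proof (Rinv_0_lt_compat (bhi + lam)); lra).
  split; [split; assumption|]. intros i Hi.
  specialize (Hb i Hi). specialize (Hdlam i Hi). specialize (Hd i Hi). specialize (Hk i Hi).
  split.
  - apply exp_bound_of_le; [exact Hlo|].
    apply (exp_ge_of_lin_exp (d i)); [lra|nra|]. rewrite Hk. nra.
  - unfold lin_exp in Hk. pose proof (exp_pos (alpha i * k i)). nra.
Qed.

End Step.

Lemma step_system_ext alpha b d d' lam j a k :
  (forall i, (1 <= i <= j)%nat -> d i = d' i) ->
  step_system alpha b d lam j a k -> step_system alpha b d' lam j a k.
Proof. intros Hdd [Hk Hsum]. split; [|exact Hsum]. intros i Hi. rewrite <- Hdd by exact Hi. auto. Qed.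

Lemma in_bounds_pos alpha lam blo bhi j a k : 0 < lam -> 0 < blo -> blo <= bhi ->
  in_bounds alpha lam blo bhi j a k -> 0 < a.
Proof. intros Hlam Hlo Hlh [[Ha _] _]. pose proof (Rinv_0_lt_compat (bhi + lam)). lra. Qed.

Lemma in_bounds_ln alpha lam blo bhi j a k i : 0 < lam -> 0 < blo -> blo <= bhi ->
  in_bounds alpha lam blo bhi j a k -> (1 <= i <= j)%nat ->
  - ln ((bhi + lam) / blo) <= alpha i * k i <= (bhi + lam) / blo - 1.
Proof.
  intros Hlam Hlo Hlh [[Hlow Hup] Hk] Hi. destruct (Hk i Hi) as [Hexp Hlin].
  set (y := alpha i * k i) in *. split.
  - assert (Hey : exp (- y) < (bhi + lam) / blo).
    { pose proof (exp_pos (- y)).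
      apply (Rmult_lt_compat_l (exp (- y))) in Hlow; [|assumption].
      apply (Rmult_lt_reg_r (/ (bhi + lam))); [apply Rinv_0_lt_compat; lra|].
      replace ((bhi + lam) / blo * / (bhi + lam)) with (/ blo) by (field; lra). lra. }
    apply ln_increasing in Hey; [|apply exp_pos]. rewrite ln_exp in Hey. lra.
  - apply (Rmult_le_compat_l (bhi + lam)) in Hup; [|lra]. unfold Rdiv. lra.
Qed.

Definition solves_step (lambda : R) (alpha rho : nat -> R) (mu sigma : nat -> nat -> R)
  (j : nat) (a : R) (k : nat -> R) (a' : R) (k' : nat -> R) : Prop :=
  / a = betaSigma alpha rho mu sigma j + lambda
        - (alphaSigma alpha j *
           sumR (fun i => lambda * a' * exp (- (alpha i * (k' i - k i))) / alpha i) j) * / a /\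
  (forall i, (1 <= i <= j)%nat ->
     k i = ((beta alpha rho mu sigma i j + lambda) * a - 1) / alpha i
           - lambda * a' * exp (- (alpha i * (k' i - k i))) / alpha i).

Lemma inv_alpha_sum_pos (alpha : nat -> R) (j : nat) : (1 <= j)%nat ->
  (forall i, (1 <= i <= j)%nat -> 0 < alpha i) -> 0 < sumR (fun i => / alpha i) j.
Proof.
  intros Hj Halpha. apply sumR_gt0; [exact Hj|]. intros i Hi.
  exact (Rinv_0_lt_compat _ (Halpha i Hi)).
Qed.

Lemma k_equation_iff (alpha c a lam a' k k' : R) : 0 < alpha ->
  k = (c * a - 1) / alpha - lam * a' * exp (- (alpha * (k' - k))) / alpha <->
  lin_exp (lam * a' * exp (- (alpha * k'))) (alpha * k) = c * a - 1.
Proof.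
  intros Halpha. unfold lin_exp.
  replace (- (alpha * (k' - k))) with (- (alpha * k') + alpha * k) by ring.
  rewrite exp_plus. split; intros H.
  - rewrite H at 1. field. lra.
  - apply (Rmult_eq_reg_l alpha); [|lra]. rewrite <- H at 1. field. lra.
Qed.

Lemma A_equation_iff (alpha b e k : nat -> R) (lam a : R) (j : nat) :
  (1 <= j)%nat -> (forall i, (1 <= i <= j)%nat -> 0 < alpha i) -> 0 < a ->
  (forall i, (1 <= i <= j)%nat -> e i = ((b i + lam) * a - 1) / alpha i - k i) ->
  (/ a = alphaSigma alpha j * sumR (fun i => b i / alpha i) j + lam
         - (alphaSigma alpha j * sumR e j) * / a <-> sumR k j = 0).
Proof.
  intros Hj Halpha Ha He.
  pose proof (inv_alpha_sum_pos alpha j Hj Halpha) as HW.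
  set (W := sumR (fun i => / alpha i) j) in *.
  set (B := sumR (fun i => b i / alpha i) j).
  set (K := sumR k j).
  assert (Hsum : sumR e j = a * B + (lam * a - 1) * W - K).
  { unfold W, B, K. rewrite <- sumR_lincomb. apply sumR_ext. intros i Hi.
    rewrite He by exact Hi. specialize (Halpha i Hi). field. lra. }
  unfold alphaSigma. fold W. rewrite Hsum.
  replace (/ W * B + lam - / W * (a * B + (lam * a - 1) * W - K) * / a)
    with (/ a + K / (W * a)) by (field; lra).
  split; intros H.
  - replace K with (K / (W * a) * (W * a)) by (field; lra). replace (K / (W * a)) with 0 by lra. ring.
  - rewrite H. unfold Rdiv. ring.
Qed.

Lemma solves_step_iff lambda alpha rho mu sigma j a k a' k' :
  (1 <= j)%nat -> (forall i, (1 <= i <= j)%nat -> 0 < alpha i) -> 0 < a ->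
  solves_step lambda alpha rho mu sigma j a k a' k' <->
  step_system alpha (fun i => beta alpha rho mu sigma i j)
    (fun i => lambda * a' * exp (- (alpha i * k' i))) lambda j a k.
Proof.
  intros Hj Halpha Ha.
  assert (Hk : (forall i, (1 <= i <= j)%nat ->
      k i = ((beta alpha rho mu sigma i j + lambda) * a - 1) / alpha i
            - lambda * a' * exp (- (alpha i * (k' i - k i))) / alpha i) <->
    (forall i, (1 <= i <= j)%nat ->
      lin_exp (lambda * a' * exp (- (alpha i * k' i))) (alpha i * k i)
      = (beta alpha rho mu sigma i j + lambda) * a - 1)).
  { split; intros H i Hi; apply k_equation_iff; auto. }
  unfold solves_step, step_system. rewrite <- Hk.
  split.
  - intros [HA Hks]. split; [exact Hks|]. revert HA.
    apply (A_equation_iff alpha (fun i => beta alpha rho mu sigma i j) _ k lambda a j Hj Halpha Ha).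
    intros i Hi. specialize (Hks i Hi). lra.
  - intros [Hks Hsum]. split; [|exact Hks].
    apply (A_equation_iff alpha (fun i => beta alpha rho mu sigma i j) _ k lambda a j Hj Halpha Ha);
      [|exact Hsum].
    intros i Hi. specialize (Hks i Hi). lra.
Qed.

Lemma betaSigma_between alpha rho mu sigma blo bhi T : (1 <= T)%nat ->
  (forall i, (1 <= i <= T)%nat -> 0 < alpha i) ->
  (forall i, (1 <= i <= T)%nat -> blo <= beta alpha rho mu sigma i T <= bhi) ->
  blo <= betaSigma alpha rho mu sigma T <= bhi.
Proof.
  intros HT Halpha Hb.
  pose proof (inv_alpha_sum_pos alpha T HT Halpha) as HW.
  set (W := sumR (fun i => / alpha i) T) in *.
  set (B := sumR (fun i => beta alpha rho mu sigma i T / alpha i) T).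
  assert (Hweighted : forall c, (forall i, (1 <= i <= T)%nat -> c <= beta alpha rho mu sigma i T) ->
            c * W <= B).
  { intros c Hc. unfold W, B. rewrite <- sumR_scal. apply sumR_le. intros i Hi.
    specialize (Hc i Hi). pose proof (Rinv_0_lt_compat _ (Halpha i Hi)). unfold Rdiv. nra. }
  assert (Hweighted' : forall c, (forall i, (1 <= i <= T)%nat -> beta alpha rho mu sigma i T <= c) ->
            B <= c * W).
  { intros c Hc. unfold W, B. rewrite <- sumR_scal. apply sumR_le. intros i Hi.
    specialize (Hc i Hi). pose proof (Rinv_0_lt_compat _ (Halpha i Hi)). unfold Rdiv. nra. }
  assert (HbS : betaSigma alpha rho mu sigma T * W = B)
    by (unfold betaSigma, alphaSigma; fold W B; field; lra).
  specialize (Hweighted blo (fun i Hi => proj1 (Hb i Hi))).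
  specialize (Hweighted' bhi (fun i Hi => proj2 (Hb i Hi))).
  split; nra.
Qed.

Lemma terminal_in_bounds alpha rho mu sigma lam blo bhi T : (1 <= T)%nat ->
  (forall i, (1 <= i <= T)%nat -> 0 < alpha i) -> 0 < lam -> 0 < blo ->
  (forall i, (1 <= i <= T)%nat -> blo <= beta alpha rho mu sigma i T <= bhi) ->
  in_bounds alpha lam blo bhi T (/ betaSigma alpha rho mu sigma T)
    (fun i => (beta alpha rho mu sigma i T * / betaSigma alpha rho mu sigma T - 1) / alpha i).
Proof.
  intros HT Halpha Hlam Hlo Hb.
  pose proof (betaSigma_between alpha rho mu sigma blo bhi T HT Halpha Hb) as Hs.
  set (s := betaSigma alpha rho mu sigma T) in *.
  assert (Ha : 0 < / s) by (apply Rinv_0_lt_compat; lra).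
  split; [split|].
  - apply Rinv_lt_contravar; nra.
  - apply Rinv_le_contravar; lra.
  - intros i Hi. specialize (Hb i Hi).
    replace (alpha i * _) with (beta alpha rho mu sigma i T * / s - 1)
      by (specialize (Halpha i Hi); field; lra).
    split; [|nra].
    apply exp_bound_of_le; [exact Hlo|].
    pose proof (exp_ineq1_le (beta alpha rho mu sigma i T * / s - 1)). nra.
Qed.

Lemma solves_step_exists lambda alpha rho mu sigma blo bhi j a' k' : (1 <= j)%nat ->
  (forall i, (1 <= i <= j)%nat -> 0 < alpha i) -> 0 < lambda -> 0 < blo ->
  (forall i, (1 <= i <= j)%nat -> blo <= beta alpha rho mu sigma i j <= bhi) ->
  in_bounds alpha lambda blo bhi (S j) a' k' ->
  exists a k, solves_step lambda alpha rho mu sigma j a k a' k' /\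
              in_bounds alpha lambda blo bhi j a k.
Proof.
  intros Hj Halpha Hlam Hlo Hb Hbnd'.
  assert (Hlh : blo <= bhi) by (specialize (Hb 1%nat ltac:(lia)); lra).
  pose proof (in_bounds_pos _ _ _ _ _ _ _ Hlam Hlo Hlh Hbnd') as Ha'.
  set (d := fun i => lambda * a' * exp (- (alpha i * k' i))).
  assert (Hd : forall i, (1 <= i <= j)%nat -> 0 < d i).
  { intros i _. unfold d. pose proof (exp_pos (- (alpha i * k' i))).
    apply Rmult_lt_0_compat; [apply Rmult_lt_0_compat|]; assumption. }
  assert (Hdlam : forall i, (1 <= i <= j)%nat -> d i * blo <= lambda).
  { intros i Hi. destruct Hbnd' as [_ Hk']. destruct (Hk' i ltac:(lia)) as [He _].
    unfold d. apply (Rmult_le_compat_l (lambda * blo)) in He; [|nra].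
    replace (lambda * blo * / blo) with lambda in He by (field; lra). nra. }
  destruct (step_system_exists alpha _ d lambda blo bhi j Hj Halpha Hlam Hlo Hb Hd Hdlam)
    as [a [k Hsys]].
  pose proof (step_system_in_bounds alpha _ d lambda blo bhi j Hj Halpha Hlam Hlo Hb Hd Hdlam a k Hsys)
    as Hbnd.
  exists a, k. split; [|exact Hbnd].
  apply solves_step_iff; [exact Hj|exact Halpha| |exact Hsys].
  exact (in_bounds_pos _ _ _ _ _ _ _ Hlam Hlo Hlh Hbnd).
Qed.

Lemma solves_step_unique lambda alpha rho mu sigma blo bhi j a k a1 k1 a' k' k1' :
  (1 <= j)%nat -> (forall i, (1 <= i <= j)%nat -> 0 < alpha i) -> 0 < lambda -> 0 < blo ->
  (forall i, (1 <= i <= j)%nat -> blo <= beta alpha rho mu sigma i j <= bhi) ->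
  0 < a' -> 0 < a -> 0 < a1 -> (forall i, (1 <= i <= j)%nat -> k1' i = k' i) ->
  solves_step lambda alpha rho mu sigma j a k a' k' ->
  solves_step lambda alpha rho mu sigma j a1 k1 a' k1' ->
  a = a1 /\ forall i, (1 <= i <= j)%nat -> k i = k1 i.
Proof.
  intros Hj Halpha Hlam Hlo Hb Ha' Ha Ha1 Hk' Hs Hs1.
  apply solves_step_iff in Hs; [|assumption..].
  apply solves_step_iff in Hs1; [|assumption..].
  apply (step_system_ext _ _ _ (fun i => lambda * a' * exp (- (alpha i * k' i)))) in Hs1;
    [|intros i Hi; rewrite Hk' by exact Hi; reflexivity].
  apply (step_system_unique alpha (fun i => beta alpha rho mu sigma i j)
           (fun i => lambda * a' * exp (- (alpha i * k' i))) lambda blo bhi j Hj Halpha Hlam Hlo Hb);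
    [|exact Hs|exact Hs1].
  intros i _. pose proof (exp_pos (- (alpha i * k' i))).
  apply Rmult_lt_0_compat; [apply Rmult_lt_0_compat|]; assumption.
Qed.

Definition terminal_condition (alpha rho : nat -> R) (mu sigma : nat -> nat -> R)
  (T : nat) (a : R) (k : nat -> R) : Prop :=
  a = / betaSigma alpha rho mu sigma T /\
  forall i, (1 <= i <= T)%nat -> k i = (beta alpha rho mu sigma i T * a - 1) / alpha i.

Lemma IsSolution_iff N0 m lambda alpha rho mu sigma A k :
  IsSolution N0 m lambda alpha rho mu sigma A k <->
  terminal_condition alpha rho mu sigma (N0 + m) (A (N0 + m)%nat) (fun i => k i (N0 + m)%nat) /\
  forall j, (N0 <= j < N0 + m)%nat ->
    solves_step lambda alpha rho mu sigma j (A j) (fun i => k i j) (A (S j)) (fun i => k i (S j)).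
Proof.
  split.
  - intros (HA & Hk & HAs & Hks). split; [split; assumption|].
    intros j Hj. split; [exact (HAs j Hj) | intros i Hi; exact (Hks j i Hj Hi)].
  - intros [[HA Hk] Hs]. repeat split; try assumption; intros j; [|intros i]; intros Hj;
      [exact (proj1 (Hs j Hj)) | exact (proj2 (Hs j Hj) i)].
Qed.

Section System.
Variables (N0 m : nat) (lambda : R) (alpha rho : nat -> R) (mu sigma : nat -> nat -> R)
  (beta_lo beta_hi : R).
Hypotheses (HN0 : (1 <= N0)%nat) (Hlambda : 0 < lambda)
  (Halpha : forall i : nat, (1 <= i)%nat -> 0 < alpha i) (Hlo : 0 < beta_lo)
  (HA2 : forall j i : nat, (N0 <= j)%nat -> (1 <= i <= j)%nat ->
     beta_lo <= beta alpha rho mu sigma i j <= beta_hi).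

Let X := (R * (nat -> R))%type.
Let Term (x : X) := terminal_condition alpha rho mu sigma (N0 + m) (fst x) (snd x).
Let Step (j : nat) (x x' : X) :=
  solves_step lambda alpha rho mu sigma j (fst x) (snd x) (fst x') (snd x').
Let Inv (j : nat) (x : X) := in_bounds alpha lambda beta_lo beta_hi j (fst x) (snd x).

Lemma alpha_pos_upto j : forall i, (1 <= i <= j)%nat -> 0 < alpha i.
Proof. intros i Hi. apply Halpha. lia. Qed.

Lemma system_solution_exists : exists A k,
  IsSolution N0 m lambda alpha rho mu sigma A k /\
  forall j, (N0 <= j <= N0 + m)%nat ->
    in_bounds alpha lambda beta_lo beta_hi j (A j) (fun i => k i j).
Proof.
  set (T := (N0 + m)%nat).
  assert (Hterm : exists x, Term x /\ Inv T x).
  { exists (/ betaSigma alpha rho mu sigma T,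
            fun i => (beta alpha rho mu sigma i T * / betaSigma alpha rho mu sigma T - 1) / alpha i).
    split; [split; reflexivity|].
    apply terminal_in_bounds; [lia|apply alpha_pos_upto|exact Hlambda|exact Hlo|].
    intros i Hi. apply HA2; unfold T in *; lia. }
  assert (Hstep : forall j x', (N0 <= j < T)%nat -> Inv (S j) x' -> exists x, Step j x x' /\ Inv j x).
  { intros j [a' k'] Hj Hbnd.
    destruct (solves_step_exists lambda alpha rho mu sigma beta_lo beta_hi j a' k')
      as [a [k [Hs Hbd]]]; [lia|apply alpha_pos_upto|exact Hlambda|exact Hlo| |exact Hbnd|].
    - intros i Hi. apply HA2; lia.
    - exists (a, k). split; assumption. }
  destruct (backward_recursion N0 T Term Step Inv ltac:(unfold T; lia) Hterm Hstep)
    as [f [HfT [Hfb Hfs]]].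
  exists (fun j => fst (f j)), (fun i j => snd (f j) i).
  split; [apply IsSolution_iff; split; [exact HfT|exact Hfs]|exact Hfb].
Qed.

Lemma system_solution_unique A k A' k' :
  IsSolution N0 m lambda alpha rho mu sigma A k ->
  IsSolution N0 m lambda alpha rho mu sigma A' k' ->
  (forall j, (N0 <= j <= N0 + m)%nat -> 0 < A j /\ 0 < A' j) ->
  forall j, (N0 <= j <= N0 + m)%nat ->
    A' j = A j /\ (forall i, (1 <= i <= j)%nat -> k' i j = k i j).
Proof.
  intros [HT Hs]%IsSolution_iff [HT' Hs']%IsSolution_iff Hpos.
  apply (backward_uniqueness N0 (N0 + m)
           (fun j x y => fst x = fst y /\ forall i, (1 <= i <= j)%nat -> snd x i = snd y i)
           Term Step (fun _ x => 0 < fst x) (fun j => (A' j, fun i => k' i j))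
           (fun j => (A j, fun i => k i j))).
  - intros [a k0] [b k1] [Ha Hk0] [Hb Hk1]. simpl in *. subst a b.
    split; [reflexivity|]. intros i Hi. rewrite Hk0, Hk1 by exact Hi. reflexivity.
  - intros j [a k0] [b k1] [a' k0'] [b' k1'] Hj Ha Hb Ha' Hsa Hsb [Hab' Hk01']. simpl in *.
    subst b'. apply (solves_step_unique lambda alpha rho mu sigma beta_lo beta_hi j
                      a k0 b k1 a' k0' k1'); try assumption.
    + lia.
    + apply alpha_pos_upto.
    + intros i Hi. apply HA2; lia.
    + intros i Hi. symmetry. apply Hk01'. lia.
  - exact HT'.
  - exact HT.
  - intros j Hj. split; apply Hpos; exact Hj.
  - intros j Hj. split; [apply Hs'|apply Hs]; exact Hj.
Qed.

End System.

Theorem lemma3p4 (N0 m : nat) (lambda : R) (alpha rho : nat -> R)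
  (mu sigma : nat -> nat -> R) (beta_lo beta_hi : R)
  (HN0 : (1 <= N0)%nat)
  (Hlambda : 0 < lambda)
  (Halpha : forall i : nat, (1 <= i)%nat -> 0 < alpha i)
  (Hrho : forall i : nat, (1 <= i)%nat -> 0 < rho i)
  (HA1 : forall i : nat, (1 <= i)%nat ->
     (exists M : R, forall j : nat, (N0 <= j)%nat -> (i <= j)%nat ->
        Rabs (mu i j) <= M) /\
     (exists M : R, forall j : nat, (N0 <= j)%nat -> (i <= j)%nat ->
        Rabs (sigma i j) <= M))
  (Hlo : 0 < beta_lo) (Hlohi : beta_lo <= beta_hi)
  (HA2 : forall j i : nat, (N0 <= j)%nat -> (1 <= i <= j)%nat ->
     beta_lo <= beta alpha rho mu sigma i j <= beta_hi) :
  exists (A : nat -> R) (k : nat -> nat -> R),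
    IsSolution N0 m lambda alpha rho mu sigma A k /\
    (forall j : nat, (N0 <= j <= N0 + m)%nat -> 0 < A j) /\
    (forall (A' : nat -> R) (k' : nat -> nat -> R),
       IsSolution N0 m lambda alpha rho mu sigma A' k' ->
       (forall j : nat, (N0 <= j <= N0 + m)%nat -> 0 < A' j) ->
       forall j : nat, (N0 <= j <= N0 + m)%nat ->
         A' j = A j /\ (forall i : nat, (1 <= i <= j)%nat -> k' i j = k i j)) /\
    (forall j : nat, (N0 <= j <= N0 + m)%nat ->
       / (beta_hi + lambda) < A j <= / beta_lo /\
       (forall i : nat, (1 <= i <= j)%nat ->
          A j * exp (- (alpha i * k i j)) <= / beta_lo /\
          - ln ((beta_hi + lambda) / beta_lo) <= alpha i * k i j
            <= (beta_hi + lambda) / beta_lo - 1)).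
Proof.
  destruct (system_solution_exists N0 m lambda alpha rho mu sigma beta_lo beta_hi
              HN0 Hlambda Halpha Hlo HA2) as [A [k [Hsol Hbnd]]].
  assert (HA : forall j, (N0 <= j <= N0 + m)%nat -> 0 < A j)
    by (intros j Hj; exact (in_bounds_pos _ _ _ _ _ _ _ Hlambda Hlo Hlohi (Hbnd j Hj))).
  exists A, k. split; [exact Hsol|]. split; [exact HA|]. split.
  - intros A' k' Hsol' HA'.
    apply (system_solution_unique N0 m lambda alpha rho mu sigma beta_lo beta_hi
             HN0 Hlambda Halpha Hlo HA2 A k A' k' Hsol Hsol').
    intros j Hj. split; [apply HA|apply HA']; exact Hj.
  - intros j Hj. destruct (Hbnd j Hj) as [HAj Hk]. split; [exact HAj|].
    intros i Hi. split; [exact (proj1 (Hk i Hi))|].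
    exact (in_bounds_ln _ _ _ _ _ _ _ i Hlambda Hlo Hlohi (Hbnd j Hj) Hi).
Qed.
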